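(* Let $P_1,P_2$ be probability measures on $(\Omega,\mathcal A)$ and $\delta\in(\tfrac12,1)$. If $\bar T(P_1,\delta)=\bar T(P_2,\delta)$, then $P_1=P_2$.
   Context: Let $(\Omega,\mathcal A)$ be a measurable space. For $n\ge1$, $\mathcal A^n$ is the product $\sigma$-algebra on $\Omega^n$; the extended event space is $\bar{\mathcal A}=\bigcup_{n\ge1}\mathcal A^n$, events tagged by their level $n$. For a probability measure $P$ on $\mathcal A$, $P^n$ is its $n$-fold product, $\bar P(A^{(n)})=P^n(A^{(n)})$ for $A^{(n)}\in\mathcal A^n$, and $\bar T(P,\delta)=\{A\in\bar{\mathcal A}:\bar P(A)\ge\delta\}$. *)

From HB Require Import structures.
From mathcomp Require Import all_boot all_order all_algebra.
From mathcomp Require Import all_classical all_reals all_analysis.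
Set Implicit Arguments. Unset Strict Implicit. Unset Printing Implicit Defensive.
Import Order.TTheory GRing.Theory Num.Theory.
Import numFieldNormedType.Exports.
Local Open Scope classical_set_scope.
Local Open Scope ring_scope.

(* Omega^n is represented by n.-tuple T, which MathComp-Analysis equips with
   the product sigma-algebra (generated by the coordinate projections). *)

Section extended.
Context d (T : measurableType d) (R : realType).

(* The n-fold product measure P^n, defined as the iterated (Tonelli)
   integral:  P^0 = Dirac at the empty tuple,
   P^(n+1)(A) = \int_x P^n {t | (x :: t) \in A} dP(x). *)
Fixpoint pow_measure (P : set T -> \bar R) (n : nat)
  : set (n.-tuple T) -> \bar R :=
  match n return set (n.-tuple T) -> \bar R with
  | 0 => fun A => if `[< A [tuple] >] then 1%E else 0%E
  | n'.+1 => fun A =>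
      (\int[P]_x @pow_measure P n' [set t : n'.-tuple T | A [tuple of x :: t]])%E
  end.

Definition ext_event := {n : nat & set (n.-tuple T)}.

Definition ext_measurable (A : ext_event) : Prop :=
  (0 < projT1 A)%N /\ measurable (projT2 A).

Definition Pbar (P : set T -> \bar R) (A : ext_event) : \bar R :=
  pow_measure P (projT2 A).

Definition Tbar (P : set T -> \bar R) (delta : R) : set ext_event :=
  [set A | ext_measurable A /\ (delta%:E <= Pbar P A)%E].

End extended.

From HB Require Import structures.
From mathcomp Require Import all_boot all_order all_algebra.
From mathcomp Require Import all_classical all_reals all_analysis.
From mathcomp Require Import ring lra measurable_realfun.
Import Order.TTheory GRing.Theory Num.Theory.
Local Open Scope ring_scope.

(** Suppose [P A < Q A] for some event [A]. Among [n] independent draws, the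
    number of draws falling in [A] concentrates (Chebyshev) around [n P A]
    under [P] and around [n Q A] under [Q]. Hence the event "at least
    [n (P A + Q A) / 2] draws fall in [A]" of [A^n] has [P^n]-probability
    below [delta] and [Q^n]-probability at least [delta] once [n] is large:
    it lies in [Tbar Q delta] but not in [Tbar P delta]. *)

Section bernoulli_sequences.
Context {R : realType}.
Implicit Types (p e : R) (h : seq bool -> R) (f : pred (seq bool)).

Fixpoint bern_expect p n h : R :=
  match n with
  | 0 => h [::]
  | n'.+1 => p * bern_expect p n' (fun s => h (true :: s))
             + (1 - p) * bern_expect p n' (fun s => h (false :: s))
  end.

Definition bern_prob p n f : R := bern_expect p n (fun s => (f s)%:R).

Lemma ler_bern_expect p n h h' : 0 <= p <= 1 ->
  (forall s, h s <= h' s) -> bern_expect p n h <= bern_expect p n h'.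
Proof.
move=> /andP[p0 p1]; elim: n h h' => [|n IH] h h' hh //=.
by apply: lerD; apply: ler_wpM2l; rewrite ?subr_ge0 //; apply: IH.
Qed.

Lemma bern_expectZ p n h a :
  bern_expect p n (fun s => a * h s) = a * bern_expect p n h.
Proof.
elim: n h => [|n IH] h //=.
by rewrite (IH (fun s => h (true :: s))) (IH (fun s => h (false :: s))); ring.
Qed.

Lemma bern_expectD p n h h' :
  bern_expect p n (fun s => h s + h' s) = bern_expect p n h + bern_expect p n h'.
Proof.
elim: n h h' => [|n IH] h h' //=.
by rewrite (IH (fun s => h (true :: s))) (IH (fun s => h (false :: s))); ring.
Qed.

Lemma bern_expect_cst p n a : bern_expect p n (fun=> a) = a.
Proof. by elim: n => [|n IH] //=; rewrite IH; ring. Qed.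

Lemma bern_prob_ge0 p n f : 0 <= p <= 1 -> 0 <= bern_prob p n f.
Proof.
move=> p01; rewrite -(bern_expect_cst p n 0).
by apply: ler_bern_expect => // s; case: (f s).
Qed.

Lemma bern_probC p n f : bern_prob p n (predC f) = 1 - bern_prob p n f.
Proof.
have : bern_prob p n (predC f) + bern_prob p n f = 1.
  rewrite -bern_expectD -[RHS](bern_expect_cst p n).
  congr (bern_expect _ _ _); apply: funext => s /=.
  by case: (f s); rewrite /= ?add0r ?addr0.
by move=> <-; rewrite addrK.
Qed.

Lemma bern_expect_sqr p n c :
  bern_expect p n (fun s => (c + (count id s)%:R) ^+ 2)
  = (c + n%:R * p) ^+ 2 + n%:R * p * (1 - p).
Proof.
elim: n c => [|n IH] c /=; first by rewrite !mul0r !addr0.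
have -> : (fun s => (c + (count id (true :: s))%:R) ^+ 2)
    = (fun s => (c + 1 + (count id s)%:R) ^+ 2).
  by apply: funext => s; rewrite /= natrD addrA.
by rewrite !IH -[n.+1]addn1 natrD; ring.
Qed.

Lemma bern_prob_deviation {p n} g f : 0 <= p <= 1 ->
  (forall s, f s -> (n%:R * g) ^+ 2 <= ((count id s)%:R - n%:R * p) ^+ 2) ->
  (n%:R * g) ^+ 2 * bern_prob p n f <= n%:R * p * (1 - p).
Proof.
move=> p01 hf; rewrite -bern_expectZ.
have -> : n%:R * p * (1 - p) =
    bern_expect p n (fun s => (- (n%:R * p) + (count id s)%:R) ^+ 2).
  by rewrite bern_expect_sqr addNr expr0n add0r.
apply: ler_bern_expect => // s; rewrite addrC.
by case: (boolP (f s)) => fs; rewrite ?mulr1 ?hf ?mulr0 ?sqr_ge0.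
Qed.

Lemma bern_prob_separation p1 p2 e : 0 <= p1 -> p1 < p2 -> p2 <= 1 -> 0 < e ->
  exists n f, [/\ (0 < n)%N, bern_prob p1 n f < e & 1 - e < bern_prob p2 n f].
Proof.
move=> p1_ge0 p12 p2_le1 e_gt0.
pose g := (p2 - p1) / 2; have g_gt0 : 0 < g by rewrite /g; nra.
have ge_gt0 : 0 < g ^+ 2 * e by rewrite mulr_gt0 // exprn_gt0.
pose n := (Num.Def.archi_bound (g ^+ 2 * e)^-1).+1.
have n_gt0 : (0 < n)%N by [].
have nR_gt0 : (0 : R) < n%:R by rewrite ltr0n.
have n_large : n%:R < (n%:R * g) ^+ 2 * e.
  have : (g ^+ 2 * e)^-1 < n%:R.
    apply: (lt_le_trans (archi_boundP _)); first by rewrite invr_ge0 ltW.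
    by rewrite ler_nat.
  by rewrite -div1r ltr_pdivrMr // => H; nra.
have tail (q : R) f : 0 <= q <= 1 ->
    (forall s, f s -> n%:R * g <= `|(count id s)%:R - n%:R * q|) ->
    bern_prob q n f < e.
  move=> q01 hf.
  have ng_gt0 : 0 < (n%:R * g) ^+ 2 by rewrite exprn_gt0 // mulr_gt0.
  rewrite -(ltr_pM2l ng_gt0); apply: (le_lt_trans (bern_prob_deviation g f q01 _)).
    move=> s /hf H; rewrite -[X in _ <= X](real_normK (num_real _)).
    by rewrite ler_sqr ?nnegrE ?normr_ge0 // mulr_ge0 // ltW.
  by move/andP: q01 => [? ?]; nra.
pose f s := n%:R * ((p1 + p2) / 2) <= (count id s)%:R :> R.
exists n, f; split => //.
- apply: tail; first by apply/andP; split; lra.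
  by move=> s; rewrite /f /g => hs; rewrite ger0_norm; nra.
- have : bern_prob p2 n (predC f) < e.
    apply: tail; first by apply/andP; split; lra.
    move=> s; rewrite /= /f /g -ltNge => hs.
    by rewrite ltr0_norm; nra.
  by rewrite bern_probC; lra.
Qed.

End bernoulli_sequences.

Local Open Scope classical_set_scope.

Lemma integral_if_asbool d (T : measurableType d) (R : realType)
    (mu : {measure set T -> \bar R}) (A : set T) (a b : R) :
  measurable A -> 0 <= a -> 0 <= b ->
  (\int[mu]_x (if `[< A x >] then a else b)%:E
   = a%:E * mu A + b%:E * mu (~` A))%E.
Proof.
move=> mA a0 b0; have mCA := measurableC mA.
have mindic (B : set T) :
    measurable B -> measurable_fun [set: T] (fun x => (\1_B x : R)%:E).
  by move=> mB; apply/measurable_EFinP; exact: measurable_indic.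
transitivity (\int[mu]_x (a%:E * (\1_A x)%:E + b%:E * (\1_(~` A) x)%:E))%E.
  apply: eq_integral => x _; rewrite !indicE.
  case: (pselect (A x)) => Ax.
    by rewrite asboolT // mem_set // memNset /= ?mule1 ?mule0 ?adde0.
  by rewrite asboolF // memNset // mem_set // mule0 mule1 add0e.
rewrite ge0_integralD //.
- by rewrite !ge0_integralZl_EFin ?integral_indic ?setIT //; exact: mindic.
- by move=> x _; rewrite mule_ge0 ?lee_fin.
- exact: measurable_funeM (mindic _ mA).
- by move=> x _; rewrite mule_ge0 ?lee_fin.
- exact: measurable_funeM (mindic _ mCA).
Qed.

Section trace_event.
Context {d : measure_display} {T : measurableType d} {R : realType} (A : set T).
Hypothesis mA : measurable A.

Definition trace_event n (f : pred (seq bool)) : set (n.-tuple T) :=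
  [set t | f (map (fun x => `[< A x >]) t)].

Lemma trace_eventS n f : trace_event n.+1 f =
  (@thead n T @^-1` A
     `&` @behead_tuple n.+1 T @^-1` trace_event n (fun s => f (true :: s)))
  `|` (@thead n T @^-1` (~` A)
     `&` @behead_tuple n.+1 T @^-1` trace_event n (fun s => f (false :: s))).
Proof.
apply/seteqP; split => t; rewrite /trace_event /=.
- rewrite [in X in X -> _](tuple_eta t) /=.
  by case: (pselect (A (thead t))) => Ht; [rewrite asboolT // => ?; left
                                         | rewrite asboolF // => ?; right].
- rewrite [in X in _ -> X](tuple_eta t) /=.
  by case=> -[Ht ft]; [rewrite asboolT | rewrite asboolF].
Qed.

Lemma measurable_trace_event n f : measurable (trace_event n f).
Proof.
elim: n f => [|n IH] f.
  have -> : trace_event 0 f = if f [::] then setT else set0.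
    by apply/seteqP; split => t; rewrite /trace_event tuple0 /=; case: (f [::]).
  by case: (f [::]).
have mhead : measurable_fun setT (@thead n T) := measurable_tnth ord0.
have mbehead := @measurable_behead d T n.
rewrite trace_eventS; apply: measurableU; apply: measurableI.
- by rewrite -[_ @^-1` _]setTI; exact: mhead.
- by rewrite -[_ @^-1` _]setTI; exact: mbehead.
- by rewrite -[_ @^-1` _]setTI; exact: mhead (measurableC mA).
- by rewrite -[_ @^-1` _]setTI; exact: mbehead.
Qed.

Lemma pow_measure_trace_event (P : probability T R) n f :
  pow_measure P (trace_event n f) = (bern_prob (fine (P A)) n f)%:E.
Proof.
have PA : P A = (fine (P A))%:E by rewrite fineK // fin_num_measure.
have p01 : 0 <= fine (P A) <= 1.
  by rewrite -!lee_fin -PA measure_ge0 probability_le1.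
elim: n f => [|n IH] f /=.
  by rewrite /trace_event /bern_prob /= asboolb; case: (f [::]).
transitivity (\int[P]_x
    (if `[< A x >] then bern_prob (fine (P A)) n (fun s => f (true :: s))
     else bern_prob (fine (P A)) n (fun s => f (false :: s)))%:E)%E.
  apply: eq_integral => x _.
  rewrite (_ : [set t | _] = trace_event n (fun s => f (`[< A x >] :: s))) // IH.
  by case: (`[< A x >]).
have PC : (P : {measure set T -> \bar R}) (~` A) = (1 - fine (P A))%:E.
  by rewrite EFinB -PA; exact: probability_setC.
rewrite integral_if_asbool ?bern_prob_ge0 // PC.
rewrite [(P : {measure set T -> \bar R}) A]PA.
by rewrite -!EFinM -EFinD /bern_prob /=; congr (_%:E); ring.
Qed.

End trace_event.

Lemma Tbar_subset_measure_le {d : measure_display} {T : measurableType d}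
    {R : realType} {P Q : probability T R} {delta : R} :
  0 < delta < 1 -> Tbar Q delta `<=` Tbar P delta ->
  forall A, measurable A -> (Q A <= P A)%E.
Proof.
move=> /andP[delta_gt0 delta_lt1] TQP A mA.
rewrite -(fineK (fin_num_measure P A mA)) -(fineK (fin_num_measure Q A mA)).
rewrite lee_fin leNgt; apply/negP => PQ.
have p01 (S : probability T R) : 0 <= fine (S A) <= 1.
  by rewrite -!lee_fin fineK ?fin_num_measure ?measure_ge0 ?probability_le1.
have /andP[P_ge0 _] := p01 P; have /andP[_ Q_le1] := p01 Q.
have e_gt0 : 0 < delta * (1 - delta) by rewrite mulr_gt0 // subr_gt0.
have [n [f [n_gt0 Pf Qf]]] := bern_prob_separation _ _ _ P_ge0 PQ Q_le1 e_gt0.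
pose E : ext_event T := existT _ n (trace_event A n f).
have mE : ext_measurable E by split => //; exact: measurable_trace_event.
have /TQP[_] : Tbar Q delta E.
  by split => //; rewrite /Pbar pow_measure_trace_event // lee_fin; nra.
by rewrite /Pbar pow_measure_trace_event // lee_fin; nra.
Qed.

Theorem mainTheorem8 (d : measure_display) (T : measurableType d) (R : realType)
  (P1 P2 : probability T R) (delta : R) :
  1 / 2 < delta < 1 ->
  Tbar P1 delta = Tbar P2 delta ->
  forall A : set T, measurable A -> P1 A = P2 A.
Proof.
move=> /andP[delta_gt_half delta_lt1] T12 A mA.
have delta01 : 0 < delta < 1 by apply/andP; split; lra.
have sub21 : Tbar P2 delta `<=` Tbar P1 delta by rewrite T12.
have sub12 : Tbar P1 delta `<=` Tbar P2 delta by rewrite T12.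
by apply/le_anti; rewrite !(Tbar_subset_measure_le delta01).
Qed.
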